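(* Let $Q\in N_n$ be a subpermutation and $A\in QU_n$, and let $A^\infty$ be the Belitskii canonical form of $A$ under $B_n$-similarity. Then $A^\infty\in QU_n$, and there exist finitely many elementary $U_n$-similarity operations $\mathcal O_1,\dots,\mathcal O_m$ such that, with $A_0=A$ and $A_k=\mathcal O_k(A_{k-1})$, all of $A_0,\dots,A_m$ lie in $QU_n$ and $A_m=DA^\infty D^{-1}$ for some invertible diagonal matrix $D$ (i.e. $A_m$ is $D_n$-similar to $A^\infty$).
   Context: $\mathbb F$ is a field. $B_n$ (resp. $U_n$, $N_n$, $D_n$) denotes the set of $n\times n$ invertible upper triangular (resp. upper triangular with all diagonal entries $1$, strictly upper triangular, invertible diagonal) matrices over $\mathbb F$; $QU_n=\{QU:U\in U_n\}$; $E_{ij}$ is the matrix unit. A subpermutation is a matrix each of whose rows and columns has at most one nonzero entry, and that entry equals $1$. An elementary $U_n$-similarity operation is a map $\mathcal O_{p,q}^\lambda:N_n\to N_n$, $\mathcal O_{p,q}^\lambda(X)=(I_n+\lambda E_{pq})X(I_n+\lambda E_{pq})^{-1}$, for some $\lambda\in\mathbb F$ and $1\le p<q\le n$. Matrices $X,Y$ are $G$-similar if $Y=BXB^{-1}$ for some $B\in G$. Belitskii order on positions $\{(i,j):1\le i<j\le n\}$: $(i,j)\prec(i',j')$ iff $i>i'$, or $i=i'$ and $j<j'$. Belitskii's algorithm for $B_n$-similarity on $N_n$: given $A\in N_n$ put $A^{(0)}=A$, $G^{(0)}=B_n$. For $k=0,1,\dots$, let $(p,q)$ be the $(k+1)$th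 position in Belitskii order and look at the $(p,q)$ entries of all matrices $G^{(k)}$-similar to $A^{(k)}$: (a) if this entry is always $0$ or can take every value of $\mathbb F$, choose $A^{(k+1)}$ $G^{(k)}$-similar to $A^{(k)}$ with that entry $0$; (b) if it takes exactly the values of $\mathbb F\setminus\{0\}$, choose $A^{(k+1)}$ with that entry $1$; (c) otherwise it is a constant $\lambda\ne0$ and $A^{(k+1)}=A^{(k)}$. $G^{(k+1)}$ is the subgroup of $g\in G^{(k)}$ such that $gA^{(k+1)}g^{-1}$ agrees with $A^{(k+1)}$ in the first $k+1$ positions. The final matrix $A^\infty$ is the Belitskii canonical form of $A$. *)

From HB Require Import structures.
From mathcomp Require Import all_boot all_order all_algebra.
Set Implicit Arguments. Unset Strict Implicit. Unset Printing Implicit Defensive.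
Import GRing.Theory.
Local Open Scope ring_scope.

Section Defs.
Variables (F : fieldType) (n : nat).
Local Notation M := 'M[F]_n.

Definition upper_tri (A : M) : Prop := forall i j : 'I_n, (j < i)%N -> A i j = 0.
Definition strict_upper (A : M) : Prop := forall i j : 'I_n, (j <= i)%N -> A i j = 0.
Definition inB (g : M) : Prop := upper_tri g /\ g \in unitmx.
Definition inU (g : M) : Prop := upper_tri g /\ forall i, g i i = 1.
Definition inD (g : M) : Prop := (forall i j : 'I_n, i != j -> g i j = 0) /\ g \in unitmx.
Definition inQU (Q A : M) : Prop := exists U, inU U /\ A = Q *m U.

Definition subpermutation (Q : M) : Prop :=
  (forall i j, Q i j = 0 \/ Q i j = 1) /\
  (forall i j j', Q i j != 0 -> Q i j' != 0 -> j = j') /\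
  (forall i i' j, Q i j != 0 -> Q i' j != 0 -> i = i').

Definition conjm (g X : M) : M := g *m X *m invmx g.

(* elementary U_n-similarity operation O_{p,q}^lambda (requires p < q) *)
Definition elem_op (p q : 'I_n) (lam : F) (X : M) : M :=
  conjm (1%:M + lam *: delta_mx p q) X.

Definition apply_ops (ops : seq ('I_n * 'I_n * F)) (A : M) : M :=
  foldl (fun X o => elem_op o.1.1 o.1.2 o.2 X) A ops.

Definition upos : {set 'I_n * 'I_n} := [set p : 'I_n * 'I_n | (p.1 < p.2)%N].
Definition bprec (p q : 'I_n * 'I_n) : bool :=
  (q.1 < p.1)%N || ((p.1 == q.1) && (p.2 < q.2)%N).
(* number of positions strictly preceding p : p is the (rank p + 1)-th position *)
Definition brank (p : 'I_n * 'I_n) : nat := #|[set q in upos | bprec q p]|.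
Definition npos : nat := #|upos|.

Definition agree_first (k : nat) (X Y : M) : Prop :=
  forall p, p \in upos -> (brank p < k)%N -> X p.1 p.2 = Y p.1 p.2.

Fixpoint Gk (As : nat -> M) (k : nat) (g : M) : Prop :=
  match k with
  | 0 => inB g
  | k'.+1 => Gk As k' g /\ agree_first k (conjm g (As k)) (As k)
  end.

Definition orbit_vals (As : nat -> M) (k : nat) (p : 'I_n * 'I_n) (x : F) : Prop :=
  exists g, Gk As k g /\ conjm g (As k) p.1 p.2 = x.

Definition belitskii_step (As : nat -> M) (k : nat) : Prop :=
  (exists g, Gk As k g /\ As k.+1 = conjm g (As k)) /\
  forall p, p \in upos -> brank p = k ->
    let V := orbit_vals As k p in
    [/\ ((forall x, V x -> x = 0) \/ (forall x, V x)) -> As k.+1 p.1 p.2 = 0,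
        (forall x, V x <-> x != 0) -> As k.+1 p.1 p.2 = 1
      & ~ ((forall x, V x -> x = 0) \/ (forall x, V x)) ->
        ~ (forall x, V x <-> x != 0) -> As k.+1 = As k].

(* As is a run of Belitskii's algorithm on A; its final matrix As npos is A^infty *)
Definition belitskii_run (A : M) (As : nat -> M) : Prop :=
  As 0 = A /\ forall k, (k < npos)%N -> belitskii_step As k.

Definition belitskii_form (A Ainf : M) : Prop :=
  exists As, belitskii_run A As /\ Ainf = As npos.

End Defs.

From mathcomp Require Import all_boot all_order all_algebra.
From Stdlib Require Import Classical ClassicalEpsilon.
From mathcomp Require Import zify ring.
Set Implicit Arguments. Unset Strict Implicit. Unset Printing Implicit Defensive.
Import GRing.Theory.
Local Open Scope ring_scope.

(* Write q(a) for the column of the 1 in row a of Q: a matrix lies in QU_n iff in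
   each row a its entries left of q(a) vanish (all of them if row a of Q is zero)
   and its entry at (a, q(a)) is 1.  Induction along the Belitskii order shows that
   A^(k) agrees in its first k positions with a matrix of QU_n that is B_n-similar
   to A, and that every g in G^(k) has g_ii = g_jj whenever an earlier nonzero entry
   sits at (i, j).  At the next position (i, j): left of q(i), a row operation lets
   the entry take every value once it takes a nonzero one, so it becomes 0; at q(i)
   the entry is g_ii / g_jj, so it becomes 1; right of q(i), the rows >= i of
   A^(k+1) keep the shape of QU_n and the rows above are repaired by truncating the
   conjugating matrix and rescaling the diagonal.  Hence A^oo = h A h^-1 lies in
   QU_n for some h in B_n.  Writing h = d u with d diagonal and u unitriangular, the
   echelon form of the rows of A forces each nonzero off-diagonal entry of u into a
   position where elementary operations preserve QU_n, and peeling these entries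
   off from the bottom row up writes conjugation by u as such operations. *)

Section UpperTriangular.
Variables (F : fieldType) (n : nat).
Local Notation M := 'M[F]_n.
Implicit Types (X Y g h : M).

Lemma ord_eqF_gt (i j : 'I_n) : (j < i)%N -> (i == j) = false.
Proof. by move=> ji; apply/eqP => E; rewrite E ltnn in ji. Qed.

Lemma ord_eqF_lt (i j : 'I_n) : (i < j)%N -> (i == j) = false.
Proof. by move=> ij; apply/eqP => E; rewrite E ltnn in ij. Qed.

Lemma upper_tri_mulmx g h : upper_tri g -> upper_tri h -> upper_tri (g *m h).
Proof.
move=> Ug Uh i j ji; rewrite mxE big1 // => k _.
case: (ltnP k i) => [ki|ik]; first by rewrite Ug ?mul0r.
by rewrite Uh ?mulr0 // (leq_trans ji ik).
Qed.

Lemma mulmx_upper_tri_diag g h i :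
  upper_tri g -> upper_tri h -> (g *m h) i i = g i i * h i i.
Proof.
move=> Ug Uh; rewrite mxE (bigD1 i) //= big1 ?addr0 // => k /negPf ki.
case: (ltngtP k i) => [lt|gt|/val_inj eq]; first by rewrite Ug ?mul0r.
  by rewrite Uh ?mulr0.
by rewrite eq eqxx in ki.
Qed.

Lemma unitmx_upper_tri g : upper_tri g -> (g \in unitmx) = [forall i, g i i != 0].
Proof.
move=> Ug; rewrite unitmxE -det_tr det_trig; last first.
  by apply/is_trig_mxP => i j ij; rewrite mxE Ug.
rewrite unitfE; under eq_bigr do rewrite mxE.
by apply/prodf_neq0/forallP => [H i|H i _]; exact: H.
Qed.

Lemma inB_diag_neq0 g i : inB g -> g i i != 0.
Proof. by case=> Ug; rewrite unitmx_upper_tri // => /forallP. Qed.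

Lemma invmx_eq g h : g *m h = 1%:M -> invmx g = h.
Proof.
move=> gh; have [ug uh] := mulmx1_unit gh.
by rewrite -[invmx g]mulmx1 -gh mulmxA mulVmx // mul1mx.
Qed.

Lemma invmxM g h : g \in unitmx -> h \in unitmx -> invmx (g *m h) = invmx h *m invmx g.
Proof.
move=> ug uh; apply: invmx_eq.
by rewrite mulmxA -(mulmxA g) mulmxV // mulmx1 mulmxV.
Qed.

(* Descending induction on the row i: in (g * g^-1) i j = 0, only the term
   g_ii (g^-1)_ij is not already known to vanish. *)
Lemma upper_tri_invmx g : inB g -> upper_tri (invmx g).
Proof.
move=> Bg; case: (Bg) => Ug ug; set h := invmx g.
suff H m (i j : 'I_n) : (n <= i + m)%N -> (j < i)%N -> h i j = 0.
  by move=> i j; apply: (H n); rewrite leq_addl.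
elim: m i j => [|m IH] i j.
  by rewrite addn0 => ni; have := ltn_ord i; rewrite ltnNge ni.
move=> nim ji; have : (g *m h) i j = 0 by rewrite mulmxV // mxE ord_eqF_gt.
rewrite mxE (bigD1 i) //= big1 ?addr0.
  by move/eqP; rewrite mulf_eq0 (negPf (inB_diag_neq0 i Bg)) => /eqP.
move=> k /negPf ki; case: (ltngtP k i) => [lt|gt|/val_inj eq].
- by rewrite Ug ?mul0r.
- by rewrite IH ?mulr0 ?(ltn_trans ji gt) // (leq_trans nim) // addnS -addSn leq_add2r.
- by rewrite eq eqxx in ki.
Qed.

Lemma invmx_upper_tri_diag g i : inB g -> (invmx g) i i = (g i i)^-1.
Proof.
move=> Bg; have Uh := upper_tri_invmx Bg; case: Bg => Ug ug.
have : (g *m invmx g) i i = 1 by rewrite mulmxV // mxE eqxx.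
rewrite mulmx_upper_tri_diag // => /(congr1 (fun x => (g i i)^-1 * x)).
by rewrite mulr1 mulrA mulVf ?mul1r // inB_diag_neq0.
Qed.

Lemma inB_mulmx g h : inB g -> inB h -> inB (g *m h).
Proof. by case=> Ug ug [Uh uh]; split; [exact: upper_tri_mulmx | rewrite unitmx_mul ug uh]. Qed.

Lemma inB_invmx g : inB g -> inB (invmx g).
Proof. by move=> Bg; split; [exact: upper_tri_invmx | rewrite unitmx_inv; case: Bg]. Qed.

Lemma inB1 : inB (1%:M : M).
Proof. by split; [move=> i j ji; rewrite mxE ord_eqF_gt | exact: unitmx1]. Qed.

Lemma conjmM g h X : g \in unitmx -> h \in unitmx ->
  conjm (g *m h) X = conjm g (conjm h X).
Proof. by move=> ug uh; rewrite /conjm invmxM // !mulmxA. Qed.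

Lemma conjm1 X : conjm 1%:M X = X.
Proof. by rewrite /conjm invmx1 mul1mx mulmx1. Qed.

Lemma conjmK g X : g \in unitmx -> conjm (invmx g) (conjm g X) = X.
Proof. by move=> ug; rewrite -conjmM ?unitmx_inv // mulVmx // conjm1. Qed.

Lemma conjmB g X Y : conjm g (X - Y) = conjm g X - conjm g Y.
Proof. by rewrite /conjm mulmxBr mulmxBl. Qed.

Lemma conjm_mulmx g X : g \in unitmx -> conjm g X *m g = g *m X.
Proof. by move=> ug; rewrite /conjm mulmxKV. Qed.

Lemma strict_upper_conjm g X : inB g -> strict_upper X -> strict_upper (conjm g X).
Proof.
move=> Bg SX r c cr; have Uh := upper_tri_invmx Bg; case: Bg => Ug _.
rewrite /conjm mxE big1 // => b _; rewrite mxE.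
case: (ltnP c b) => cb; first by rewrite Uh ?mulr0.
rewrite big1 ?mul0r // => a _.
case: (ltnP a r) => ar; first by rewrite Ug ?mul0r.
by rewrite SX ?mulr0 // (leq_trans cb) // (leq_trans cr).
Qed.

Lemma strict_upperB X Y : strict_upper X -> strict_upper Y -> strict_upper (X - Y).
Proof. by move=> SX SY i j ji; rewrite !mxE SX // SY // subr0. Qed.

End UpperTriangular.

Section BelitskiiOrder.
Variable n : nat.
Implicit Types p q r : 'I_n * 'I_n.

Lemma in_upos p : (p \in upos n) = (p.1 < p.2)%N.
Proof. by rewrite inE. Qed.

Lemma bprec_trans p q r : bprec p q -> bprec q r -> bprec p r.
Proof.
rewrite /bprec => /orP[h1|/andP[/eqP e1 h1]] /orP[h2|/andP[/eqP e2 h2]].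
- by rewrite (ltn_trans h2 h1).
- by rewrite -e2 h1.
- by rewrite e1 h2.
- by rewrite e1 e2 eqxx (ltn_trans h1 h2) orbT.
Qed.

Lemma bprec_irr p : bprec p p = false.
Proof. by rewrite /bprec ltnn eqxx ltnn. Qed.

Lemma bprec_total p q : p != q -> bprec p q || bprec q p.
Proof.
case: p q => [a b] [c d]; rewrite /bprec xpair_eqE negb_and /=.
case: (ltngtP a c) => [|//|/val_inj <-]; first by rewrite orbT.
by rewrite eqxx /=; case: (ltngtP b d) => [||/val_inj ->]; rewrite ?eqxx ?orbT.
Qed.

Lemma bprec_le (a b r c : 'I_n) : (r <= a)%N -> (b <= c)%N -> (a, b) != (r, c) ->
  bprec (a, b) (r, c).
Proof.
move=> ra bc ne; rewrite /bprec /=; case: (ltngtP r a) => [//|ar|/val_inj ar].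
  by rewrite ltnNge ra in ar.
subst; rewrite eqxx /= ltn_neqAle bc andbT.
by apply: contra ne => /eqP/val_inj ->.
Qed.

Lemma brank_lt p q : p \in upos n -> bprec p q -> (brank p < brank q)%N.
Proof.
move=> pu pq; rewrite /brank; apply: proper_card; apply/properP; split.
  apply/subsetP => r; rewrite !inE => /andP[-> rp] /=.
  exact: bprec_trans rp pq.
by exists p; rewrite inE ?bprec_irr ?andbF // pu pq.
Qed.

Lemma brank_ltE p q : p \in upos n -> q \in upos n ->
  (brank p < brank q)%N = bprec p q.
Proof.
move=> pu qu; apply/idP/idP; last exact: brank_lt.
move=> lt; case: (eqVneq p q) => [E|ne]; first by rewrite E ltnn in lt.
case/orP: (bprec_total ne) => // qp.
by have := brank_lt qu qp; rewrite ltnNge (ltnW lt).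
Qed.

Lemma brank_inj p q : p \in upos n -> q \in upos n -> brank p = brank q -> p = q.
Proof.
move=> pu qu E; apply/eqP; apply: contraT => /bprec_total/orP[] H.
  by have := brank_lt pu H; rewrite E ltnn.
by have := brank_lt qu H; rewrite E ltnn.
Qed.

Lemma brank_lt_npos p : p \in upos n -> (brank p < npos n)%N.
Proof.
move=> pu; rewrite /brank /npos; apply: proper_card; apply/properP; split.
  by apply/subsetP => r; rewrite inE => /andP[].
by exists p => //; rewrite inE bprec_irr andbF.
Qed.

Lemma brank_onto k : (k < npos n)%N -> exists2 p, p \in upos n & brank p = k.
Proof.
move=> kn; pose T := {p : 'I_n * 'I_n | p \in upos n}.
pose f (p : T) : 'I_(npos n) := Ordinal (brank_lt_npos (valP p)).
have f_inj : injective f.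
  by move=> p q /(congr1 val) /= E; apply: val_inj; apply: brank_inj (valP p) (valP q) E.
have card_T : (#|{: T}| >= #|{: 'I_(npos n)}|)%N by rewrite card_ord card_sig.
have /codomP [p /(congr1 val) /= E] := inj_card_onto f_inj card_T (Ordinal kn).
by exists (val p); [exact: valP | rewrite E].
Qed.

End BelitskiiOrder.

Section Agreement.
Variables (F : fieldType) (n : nat).
Local Notation M := 'M[F]_n.
Implicit Types (X Y Z g h : M).

Definition vanish_first k X :=
  forall q, q \in upos n -> (brank q < k)%N -> X q.1 q.2 = 0.

Lemma agree_firstE k X Y : agree_first k X Y <-> vanish_first k (X - Y).
Proof.
split=> H q qu qk; have := H q qu qk; rewrite !mxE; first by move->; rewrite subrr.
by move/eqP; rewrite subr_eq0 => /eqP.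
Qed.

(* Entries of X up to position q and the factors of g, g^-1 meet only at q. *)
Lemma conjm_entry_first k g X q : inB g -> strict_upper X -> vanish_first k X ->
  q \in upos n -> (brank q <= k)%N ->
  conjm g X q.1 q.2 = g q.1 q.1 * X q.1 q.2 * invmx g q.2 q.2.
Proof.
move=> Bg SX VX qu qk; have Uh := upper_tri_invmx Bg; case: Bg => Ug _.
case: q qu qk => r c qu qk /=.
have X0 (a b : 'I_n) : (r <= a)%N -> (b <= c)%N -> (a, b) != (r, c) -> X a b = 0.
  move=> ra bc ne; case: (ltnP a b) => ab; last exact: SX.
  apply: (VX (a, b)); first by rewrite in_upos.
  by apply: leq_trans qk; apply: brank_lt; rewrite ?in_upos //; exact: bprec_le.
rewrite /conjm mxE (bigD1 c) //= big1 ?addr0; last first.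
  move=> b /negPf bc; case: (ltngtP b c) => [lt|gt|/val_inj eq].
  - rewrite mxE big1 ?mul0r // => a _.
    case: (ltnP a r) => ar; first by rewrite Ug ?mul0r.
    by rewrite X0 ?mulr0 ?(ltnW lt) // xpair_eqE bc andbF.
  - by rewrite Uh ?mulr0.
  - by rewrite eq eqxx in bc.
congr (_ * _); rewrite mxE (bigD1 r) //= big1 ?addr0 // => a /negPf ar.
case: (ltnP a r) => ar'; first by rewrite Ug ?mul0r.
by rewrite X0 ?mulr0 // xpair_eqE ar.
Qed.

Lemma vanish_first_conjm k g X :
  inB g -> strict_upper X -> vanish_first k X -> vanish_first k (conjm g X).
Proof.
move=> Bg SX VX q qu qk; rewrite (conjm_entry_first Bg SX VX qu (ltnW qk)).
by rewrite VX // mulr0 mul0r.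
Qed.

Lemma agree_first_conjm k g X Y : inB g -> strict_upper X -> strict_upper Y ->
  agree_first k X Y -> agree_first k (conjm g X) (conjm g Y).
Proof.
move=> Bg SX SY /agree_firstE V; apply/agree_firstE; rewrite -conjmB.
exact: vanish_first_conjm (strict_upperB SX SY) V.
Qed.

Lemma agree_first_conjm_next k g X Y q : inB g -> strict_upper X -> strict_upper Y ->
  agree_first k X Y -> q \in upos n -> brank q = k ->
  conjm g X q.1 q.2 - conjm g Y q.1 q.2 =
    g q.1 q.1 * (X q.1 q.2 - Y q.1 q.2) * invmx g q.2 q.2.
Proof.
move=> Bg SX SY /agree_firstE V qu qk.
have := conjm_entry_first Bg (strict_upperB SX SY) V qu (eq_leq qk).
by rewrite conjmB !mxE.
Qed.

Lemma agree_first_sym k X Y : agree_first k X Y -> agree_first k Y X.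
Proof. by move=> H q qu qk; rewrite H. Qed.

Lemma agree_first_trans k X Y Z :
  agree_first k X Y -> agree_first k Y Z -> agree_first k X Z.
Proof. by move=> H1 H2 q qu qk; rewrite H1 ?H2. Qed.

Lemma agree_first_le k l X Y : (l <= k)%N -> agree_first k X Y -> agree_first l X Y.
Proof. by move=> lk H q qu ql; rewrite H // (leq_trans ql lk). Qed.

(* Along a run, stab k (A^(k)) is the group G^(k). *)
Definition stab k X g := inB g /\ agree_first k (conjm g X) X.

Lemma stab1 k X : stab k X 1%:M.
Proof. by split; [exact: inB1 | rewrite conjm1]. Qed.

Lemma stab_mulmx k X g h : strict_upper X -> stab k X g -> stab k X h -> stab k X (g *m h).
Proof.
move=> SX [Bg Hg] [Bh Hh]; split; first exact: inB_mulmx.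
rewrite conjmM; [|by case: Bg|by case: Bh].
apply: agree_first_trans Hg; apply: agree_first_conjm => //.
exact: strict_upper_conjm.
Qed.

Lemma stab_invmx k X g : strict_upper X -> stab k X g -> stab k X (invmx g).
Proof.
move=> SX [Bg Hg]; split; first exact: inB_invmx.
have := agree_first_conjm (inB_invmx Bg) (strict_upper_conjm Bg SX) SX Hg.
by rewrite conjmK; [move/agree_first_sym | case: Bg].
Qed.

Lemma stab_agree k X Y g : strict_upper X -> strict_upper Y -> agree_first k X Y ->
  stab k X g -> stab k Y g.
Proof.
move=> SX SY XY [Bg Hg]; split => //.
apply: agree_first_trans (agree_first_sym (agree_first_conjm Bg SX SY XY)) _.
exact: agree_first_trans Hg XY.
Qed.

Lemma stabW k X g : stab k.+1 X g -> stab k X g.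
Proof. by case=> Bg H; split => //; apply: agree_first_le H. Qed.

End Agreement.

Section QUShape.
Variables (F : fieldType) (n : nat) (Q : 'M[F]_n).
Local Notation M := 'M[F]_n.
Implicit Types (X Y : M) (w : 'I_n -> F).
Hypothesis SQ : strict_upper Q.
Hypothesis PQ : subpermutation Q.

(* Vacuously true when row a of Q is zero. *)
Definition before_pivot (a c : 'I_n) := forall b, Q a b != 0 -> (c < b)%N.

Definition QU_shape Y :=
  (forall a c, before_pivot a c -> Y a c = 0) /\ (forall a b, Q a b != 0 -> Y a b = 1).

Lemma subperm_eq1 (a b : 'I_n) : Q a b != 0 -> Q a b = 1.
Proof. by case: PQ => H _ nz; case: (H a b) => // E; rewrite E eqxx in nz. Qed.

Lemma subperm_row_uniq (a b b' : 'I_n) : Q a b != 0 -> Q a b' != 0 -> b = b'.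
Proof. by case: PQ => _ [H _]; apply: H. Qed.

Lemma subperm_col_uniq (a a' b : 'I_n) : Q a b != 0 -> Q a' b != 0 -> a = a'.
Proof. by case: PQ => _ [_ H]; apply: H. Qed.

Lemma strict_upper_neq0_lt (a b : 'I_n) : Q a b != 0 -> (a < b)%N.
Proof. by move=> nz; rewrite ltnNge; apply/negP => ba; rewrite SQ ?eqxx in nz. Qed.

Lemma before_pivotE (a b c : 'I_n) : Q a b != 0 -> before_pivot a c <-> (c < b)%N.
Proof.
move=> nz; split=> [|cb b' nz']; first exact.
by rewrite -(subperm_row_uniq nz nz').
Qed.

Lemma before_pivot_le (a c : 'I_n) : (c <= a)%N -> before_pivot a c.
Proof. by move=> ca b nz; apply: leq_ltn_trans ca (strict_upper_neq0_lt nz). Qed.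

Lemma pivot_cases (a c : 'I_n) :
  before_pivot a c \/ exists2 b, Q a b != 0 & (b <= c)%N.
Proof.
case: (classic (exists2 b, Q a b != 0 & (b <= c)%N)) => [|none]; first by right.
by left => b nz; rewrite ltnNge; apply/negP => bc; apply: none; exists b.
Qed.

Lemma QU_shape_strict Y : QU_shape Y -> strict_upper Y.
Proof. by case=> H _ a c ca; apply: H; exact: before_pivot_le. Qed.

Lemma sum_mulQ w (a0 c : 'I_n) : Q a0 c != 0 -> \sum_a w a * Q a c = w a0.
Proof.
move=> nz; rewrite (bigD1 a0) //= subperm_eq1 // mulr1 big1 ?addr0 // => a ne.
case: (eqVneq (Q a c) 0) => [->|nz']; first by rewrite mulr0.
by rewrite (subperm_col_uniq nz nz') eqxx in ne.
Qed.

Lemma sum_Qmul (Y : M) (a b : 'I_n) c : Q a b != 0 -> \sum_b' Q a b' * Y b' c = Y b c.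
Proof.
move=> nz; rewrite (bigD1 b) //= subperm_eq1 // mul1r big1 ?addr0 // => b' ne.
case: (eqVneq (Q a b') 0) => [->|nz']; first by rewrite mul0r.
by rewrite (subperm_row_uniq nz nz') eqxx in ne.
Qed.

Lemma inQU_shape Y : inQU Q Y -> QU_shape Y.
Proof.
case=> U [[UU dU] ->]; split=> [a c za|a b nz]; last by rewrite mxE (sum_Qmul _ _ nz) dU.
rewrite mxE big1 // => b _.
case: (eqVneq (Q a b) 0) => [->|nz]; first by rewrite mul0r.
by rewrite UU ?mulr0 // za.
Qed.

(* Row b of the unitriangular factor is the row of Y through the 1 of column b of Q. *)
Lemma QU_shape_inQU Y : QU_shape Y -> inQU Q Y.
Proof.
case=> Y0 Y1.
pose U : M := \matrix_(b, c)
  (if [pick a | Q a b != 0] is Some a then Y a c else (b == c)%:R).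
exists U; split; first split.
- move=> b c cb; rewrite mxE; case: pickP => [a nz|_]; last by rewrite ord_eqF_gt.
  by apply: Y0; rewrite (before_pivotE _ nz).
- by move=> b; rewrite mxE; case: pickP => [a nz|_]; [exact: Y1 | rewrite eqxx].
apply/matrixP => a c; rewrite mxE.
case: (pickP (fun b => Q a b != 0)) => [b nz|none].
  rewrite (sum_Qmul _ _ nz) mxE; case: pickP => [a' nz'|/(_ a)]; last by rewrite nz.
  by rewrite (subperm_col_uniq nz' nz).
rewrite big1 ?Y0 // => [b|b _]; first by rewrite (negbFE (none b)).
by rewrite (eqP (negbFE (none b))) mul0r.
Qed.

Lemma QU_shape_comb_left w Y (m : nat) : QU_shape Y ->
  (forall a b : 'I_n, Q a b != 0 -> (b < m)%N -> w a = 0) ->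
  forall c : 'I_n, (c <= m)%N -> \sum_a w a * Y a c = \sum_a w a * Q a c.
Proof.
case=> Y0 Y1 H c cm; apply: eq_bigr => a _.
case: (eqVneq (w a) 0) => [->|wa]; first by rewrite !mul0r.
case: (eqVneq (Q a c) 0) => [Qac|nz]; last by rewrite Y1 // subperm_eq1.
rewrite Qac Y0 // => b nz; case: (ltngtP c b) => // [bc|/val_inj E].
  by rewrite (H a b) ?eqxx // (leq_trans bc cm) in wa.
by rewrite -E Qac eqxx in nz.
Qed.

(* The rows of a matrix of QU_n are in echelon form along Q. *)
Lemma QU_shape_comb_eq0 w Y (m : nat) : QU_shape Y ->
  (forall c : 'I_n, (c < m)%N -> \sum_a w a * Y a c = 0) ->
  forall a b : 'I_n, Q a b != 0 -> (b < m)%N -> w a = 0.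
Proof.
move=> QY; elim: m => [|m IH] H a b nz bm //.
have IH' := IH (fun c cm => H c (ltnW cm)).
rewrite ltnS leq_eqVlt in bm; case/orP: bm => [/eqP bm|]; last exact: IH' nz.
have := H b; rewrite bm ltnSn => /(_ isT).
by rewrite (QU_shape_comb_left QY IH') ?bm // (sum_mulQ _ nz).
Qed.

Lemma QU_shape_comb_eqQ w Y (m : 'I_n) : QU_shape Y ->
  (forall c : 'I_n, (c < m)%N -> \sum_a w a * Y a c = 0) ->
  \sum_a w a * Y a m = \sum_a w a * Q a m.
Proof.
move=> QY H; apply: (@QU_shape_comb_left _ _ m QY) => // a b nz bm.
exact: (QU_shape_comb_eq0 QY H nz bm).
Qed.

End QUShape.

Section Constructions.
Variables (F : fieldType) (n : nat).
Local Notation M := 'M[F]_n.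
Implicit Types (X Y g h : M) (w d : 'I_n -> F).

Lemma sum_mul_upper_tri_eq0 w h (s : nat) : upper_tri h ->
  (forall b : 'I_n, (b < s)%N -> w b = 0) ->
  forall c : 'I_n, (c < s)%N -> \sum_b w b * h b c = 0.
Proof.
move=> Uh ws c cs; apply: big1 => b _.
case: (ltnP c b) => cb; first by rewrite Uh ?mulr0.
by rewrite ws ?mul0r // (leq_ltn_trans cb cs).
Qed.

Lemma sum_mul_upper_tri_diag w h (s : 'I_n) : upper_tri h ->
  (forall b : 'I_n, (b < s)%N -> w b = 0) ->
  \sum_b w b * h b s = w s * h s s.
Proof.
move=> Uh ws; rewrite (bigD1 s) //= big1 ?addr0 // => b ne.
case: (ltngtP b s) => [lt|gt|/val_inj E]; first by rewrite ws ?mul0r.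
  by rewrite Uh ?mulr0.
by rewrite E eqxx in ne.
Qed.

Definition single_row (i : 'I_n) w : M := \matrix_(r, c) ((r == i)%:R * w c).

Section RowOperation.
Variables (i : 'I_n) (w : 'I_n -> F) (t : F).
Hypothesis w_le_i : forall a : 'I_n, (a <= i)%N -> w a = 0.

Lemma single_row_sqr : single_row i w *m single_row i w = 0.
Proof.
apply/matrixP => r c; rewrite !mxE big1 // => b _; rewrite !mxE.
case: (eqVneq b i) => [->|ne]; first by rewrite w_le_i ?mulr0 ?mul0r.
by rewrite ?(negPf ne) mul0r mulr0.
Qed.

Lemma row_op_mulV :
  (1%:M + t *: single_row i w) *m (1%:M - t *: single_row i w) = 1%:M.
Proof.
rewrite mulmxDl mul1mx mulmxBr mulmx1 -scalemxAl -scalemxAr.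
by rewrite scalerA single_row_sqr scaler0 subr0 subrK.
Qed.

Lemma inB_row_op : inB (1%:M + t *: single_row i w).
Proof.
split; last by case: (mulmx1_unit row_op_mulV).
move=> r c cr; rewrite !mxE ord_eqF_gt // mulr0n add0r.
case: (eqVneq r i) => [E|ne]; last by rewrite ?(negPf ne) mul0r mulr0.
by rewrite E in cr; rewrite w_le_i ?mulr0 // ltnW.
Qed.

(* The quadratic term vanishes because w is supported right of i and Y is
   strictly upper triangular. *)
Lemma conjm_row_op Y : strict_upper Y -> forall r c : 'I_n,
  conjm (1%:M + t *: single_row i w) Y r c =
    Y r c + (r == i)%:R * t * \sum_a w a * Y a c - t * (Y r i * w c).
Proof.
move=> SY r c; rewrite /conjm (invmx_eq row_op_mulV).
set W := single_row i w.
have YW : (Y *m W) r c = Y r i * w c.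
  rewrite mxE (bigD1 i) //= big1 ?addr0; first by rewrite mxE eqxx mul1r.
  by move=> b ne; rewrite mxE (negPf ne) mul0r mulr0.
have WYW : (W *m Y *m W) r c = 0.
  rewrite mxE big1 // => b _; rewrite !mxE.
  case: (eqVneq b i) => [->|ne]; last by rewrite ?(negPf ne) mul0r mulr0.
  rewrite big1 ?mul0r // => a _; rewrite mxE.
  case: (leqP a i) => ai; first by rewrite w_le_i ?mulr0 ?mul0r.
  by rewrite SY ?mulr0 // ltnW.
have WY : (W *m Y) r c = (r == i)%:R * \sum_a w a * Y a c.
  by rewrite mxE mulr_sumr; apply: eq_bigr => a _; rewrite mxE mulrA.
rewrite mulmxBr mulmx1 mulmxDl mul1mx mulmxDl -!scalemxAl -!scalemxAr scalerA.
move: YW WYW WY; set YW := Y *m W; set WYW := W *m Y *m W; set WY := W *m Y.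
by rewrite !mxE => -> -> ->; rewrite mulr0 addr0 mulrA [t * _]mulrC.
Qed.

Lemma conjm_row_op_ge Y : strict_upper Y -> forall r c : 'I_n, (i <= r)%N ->
  conjm (1%:M + t *: single_row i w) Y r c = Y r c + (r == i)%:R * t * \sum_a w a * Y a c.
Proof. by move=> SY r c ir; rewrite conjm_row_op // (SY r i ir) mul0r mulr0 subr0. Qed.

End RowOperation.

Definition diagm d : M := diag_mx (\row_c d c).

Lemma diagmE d (a b : 'I_n) : diagm d a b = (a == b)%:R * d a.
Proof. by rewrite !mxE mulr_natl. Qed.

Lemma diagm_mulV d : (forall c, d c != 0) -> diagm d *m diagm (fun c => (d c)^-1) = 1%:M.
Proof.
move=> nz; apply/matrixP => a b; rewrite mul_diag_mx !mxE.
by case: (eqVneq a b) => [->|ne]; rewrite ?mulr1n ?mulr0n ?mulr0 ?mulfV.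
Qed.

Lemma inB_diagm d : (forall c, d c != 0) -> inB (diagm d).
Proof.
move=> nz; split; first by move=> a b ba; rewrite diagmE ord_eqF_gt // mul0r.
by case: (mulmx1_unit (diagm_mulV nz)).
Qed.

Lemma conjm_diagmE d X (a b : 'I_n) : (forall c, d c != 0) ->
  conjm (diagm d) X a b = d a * X a b * (d b)^-1.
Proof.
move=> nz; rewrite /conjm (invmx_eq (diagm_mulV nz)) /diagm.
by rewrite mul_mx_diag mul_diag_mx !mxE.
Qed.

Definition trunc_rows (i : nat) g : M :=
  \matrix_(r, c) (if (r < i)%N then (r == c)%:R else g r c).

Lemma inB_trunc_rows i g : inB g -> inB (trunc_rows i g).
Proof.
move=> Bg; case: (Bg) => Ug _.
have Ut : upper_tri (trunc_rows i g).
  by move=> r c cr; rewrite mxE; case: ifP => _; [rewrite ord_eqF_gt | exact: Ug].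
split => //; rewrite unitmx_upper_tri //; apply/forallP => c; rewrite mxE.
by case: ifP => _; [rewrite eqxx oner_neq0 | exact: inB_diag_neq0].
Qed.

Lemma conjm_trunc_rows_lt i g Y : forall r c : 'I_n, (r < i)%N ->
  conjm (trunc_rows i g) Y r c = \sum_b Y r b * invmx (trunc_rows i g) b c.
Proof.
move=> r c ri; rewrite /conjm mxE; apply: eq_bigr => b _; congr (_ * _).
rewrite mxE (bigD1 r) //= big1 ?addr0; first by rewrite mxE ri eqxx mul1r.
by move=> a ne; rewrite mxE ri eq_sym (negPf ne) mul0r.
Qed.

(* Row r >= i of g Y g^-1 times g or times the truncation of g is row r of g Y,
   since g Y g^-1 is strictly upper triangular. *)
Lemma conjm_trunc_rows_ge i g Y : inB g -> strict_upper Y ->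
  forall r c : 'I_n, (i <= r)%N -> conjm (trunc_rows i g) Y r c = conjm g Y r c.
Proof.
move=> Bg SY r c ir; have Bt := inB_trunc_rows i Bg.
have SZ : strict_upper (conjm g Y) by exact: strict_upper_conjm.
have ug : g \in unitmx by case: Bg.
have ut : trunc_rows i g \in unitmx by case: Bt.
have rows c' : (conjm g Y *m trunc_rows i g) r c' =
               (conjm (trunc_rows i g) Y *m trunc_rows i g) r c'.
  rewrite (conjm_mulmx Y ut); transitivity ((conjm g Y *m g) r c').
    rewrite [LHS]mxE [RHS]mxE; apply: eq_bigr => b _.
    case: (leqP b r) => br; first by rewrite SZ ?mul0r.
    by rewrite [trunc_rows i g b c']mxE ltnNge (leq_trans ir (ltnW br)).
  rewrite (conjm_mulmx Y ug) [LHS]mxE [RHS]mxE; apply: eq_bigr => a _.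
  by rewrite [trunc_rows i g r a]mxE ltnNge ir.
rewrite -(mulmxK ut (conjm g Y)) -(mulmxK ut (conjm (trunc_rows i g) Y)) !mxE.
by apply: eq_bigr => b _; rewrite rows.
Qed.

End Constructions.

Section PivotRescaling.
Variables (F : fieldType) (n : nat) (Q X : 'M[F]_n) (i : nat).
Hypothesis SQ : strict_upper Q.
Hypothesis PQ : subpermutation Q.
Hypothesis X_neq0 : forall a b : 'I_n, Q a b != 0 -> X a b != 0.
Hypothesis X_eq1 : forall a b : 'I_n, Q a b != 0 -> (i <= a)%N -> X a b = 1.

(* d is built from the bottom row up: d a := d b / X a b for the pivot b of row a. *)
Lemma pivot_rescaling_rows m : exists d : 'I_n -> F, [/\ forall c, d c != 0,
  forall c : 'I_n, (i <= c)%N -> d c = 1 &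
  forall a b : 'I_n, Q a b != 0 -> (n <= a + m)%N -> d a * X a b = d b].
Proof.
elim: m => [|m [d [dnz d1 dX]]].
  exists (fun _ => 1); split => // [c|a b _]; first exact: oner_neq0.
  by rewrite addn0 => na; have := ltn_ord a; rewrite ltnNge na.
case: (ltnP m n) => mn; last first.
  by exists d; split => // a b nz _; apply: dX nz _; rewrite (leq_trans mn) ?leq_addl.
have a0lt : (n - m.+1 < n)%N by lia.
pose a0 : 'I_n := Ordinal a0lt.
pose d' (c : 'I_n) := if (c == a0) && (a0 < i)%N then
  (if [pick b | Q a0 b != 0] is Some b then d b / X a0 b else 1) else d c.
exists d'; split.
- move=> c; rewrite /d'; case: ifP => _; last exact: dnz.
  case: pickP => [b nz|_]; last exact: oner_neq0.
  by rewrite mulf_neq0 ?invr_eq0 ?dnz ?X_neq0.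
- move=> c ic; rewrite /d'; case: ifP => [/andP[/eqP E a0i]|_]; last exact: d1.
  by rewrite -E ltnNge ic in a0i.
move=> a b nz nam; have ab := strict_upper_neq0_lt SQ nz.
have a0a : (a0 <= a)%N by rewrite /=; lia.
have -> : d' b = d b.
  rewrite /d'; case: ifP => // /andP[/eqP E _].
  by rewrite E in ab; rewrite ltnNge a0a in ab.
rewrite /d'; case: (eqVneq a a0) => [E|ne] /=; last first.
  apply: dX nz _; have : (val a != val a0) by rewrite (inj_eq val_inj).
  by move: a0a nam mn => /=; lia.
case: ifP => a0i.
  case: pickP => [b' nz'|/(_ b)]; last by rewrite -E nz.
  by rewrite -E in nz'; rewrite (subperm_row_uniq PQ nz nz') -E divfK ?X_neq0.
have ia : (i <= a)%N by rewrite E leqNgt a0i.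
by rewrite X_eq1 // mulr1 !d1 // (leq_trans ia (ltnW ab)).
Qed.

Lemma pivot_rescaling : exists d : 'I_n -> F, [/\ forall c, d c != 0,
  forall c : 'I_n, (i <= c)%N -> d c = 1 &
  forall a b : 'I_n, Q a b != 0 -> d a * X a b * (d b)^-1 = 1].
Proof.
have [d [dnz d1 dX]] := pivot_rescaling_rows n.
by exists d; split => // a b nz; rewrite dX ?leq_addl // divff.
Qed.

End PivotRescaling.

(* Keep rows >= i of g Y g^-1 but replace g by the identity in rows < i: the rows
   < i become rows of Y times an upper triangular matrix, which keeps their zeros
   before the pivots, and a diagonal rescaling restores the 1s at the pivots. *)
Lemma QU_shape_complete_rows (F : fieldType) (n : nat) (Q Y g : 'M[F]_n) (i : nat) :
  strict_upper Q -> subpermutation Q -> QU_shape Q Y -> inB g ->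
  (forall r c : 'I_n, (i <= r)%N -> before_pivot Q r c \/ Q r c != 0 ->
     conjm g Y r c = Y r c) ->
  exists2 h, inB h &
    QU_shape Q (conjm h Y) /\ forall r c : 'I_n, (i <= r)%N -> conjm h Y r c = conjm g Y r c.
Proof.
move=> SQ PQ [Y0 Y1] Bg Hg; have SY := QU_shape_strict SQ (conj Y0 Y1).
have Bt := inB_trunc_rows i Bg; have Uti := upper_tri_invmx Bt.
set t := trunc_rows i g in Bt Uti *; set X := conjm t Y.
have Xge (r c : 'I_n) : (i <= r)%N -> X r c = conjm g Y r c by exact: conjm_trunc_rows_ge.
have Xlt (r c : 'I_n) : (r < i)%N -> X r c = \sum_b Y r b * invmx t b c.
  exact: conjm_trunc_rows_lt.
have X_neq0 a b : Q a b != 0 -> X a b != 0.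
  move=> nz; case: (ltnP a i) => ai; last by rewrite Xge // Hg ?Y1 ?oner_neq0 //; right.
  rewrite Xlt // (sum_mul_upper_tri_diag Uti); last first.
    by move=> b' b'b; apply: Y0; rewrite (before_pivotE PQ _ nz).
  by rewrite Y1 // mul1r invmx_upper_tri_diag // invr_eq0 inB_diag_neq0.
have X_eq1 a b : Q a b != 0 -> (i <= a)%N -> X a b = 1.
  by move=> nz ia; rewrite Xge // Hg //; [exact: Y1 | right].
have [d [dnz d1 dX]] := pivot_rescaling SQ PQ X_neq0 X_eq1.
have Bd := inB_diagm dnz.
exists (diagm d *m t); first exact: inB_mulmx.
have -> : conjm (diagm d *m t) Y = conjm (diagm d) X.
  by rewrite conjmM //; [case: Bd | case: Bt].
have rows (r c : 'I_n) : (i <= r)%N -> conjm (diagm d) X r c = conjm g Y r c.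
  move=> ir; rewrite conjm_diagmE //; case: (leqP c r) => cr.
    by rewrite Xge // (strict_upper_conjm Bg SY cr) mulr0 mul0r.
  by rewrite !d1 ?(leq_trans ir (ltnW cr)) // invr1 mul1r mulr1 Xge.
split=> //; split=> [a c bp|a b nz]; last by rewrite conjm_diagmE //; exact: dX.
case: (ltnP a i) => ai; last by rewrite rows // Hg //; [exact: Y0 | left].
rewrite conjm_diagmE // Xlt // (sum_mul_upper_tri_eq0 (s := c.+1) Uti) ?mulr0 ?mul0r //.
by move=> b bc; apply: Y0 => b' nz; apply: leq_ltn_trans (bp b' nz); rewrite -ltnS.
Qed.

Section BSimilarity.
Variables (F : fieldType) (n : nat) (A : 'M[F]_n).
Implicit Types (Y Z g : 'M[F]_n).

Definition Bsimilar Y := exists2 h, inB h & Y = conjm h A.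

Lemma Bsimilar_refl : Bsimilar A.
Proof. by exists 1%:M; [exact: inB1 | rewrite conjm1]. Qed.

Lemma Bsimilar_strict Y : strict_upper A -> Bsimilar Y -> strict_upper Y.
Proof. by move=> SA [h Bh ->]; exact: strict_upper_conjm. Qed.

Lemma Bsimilar_conjm g Y : inB g -> Bsimilar Y -> Bsimilar (conjm g Y).
Proof.
move=> Bg [h Bh ->]; exists (g *m h); first exact: inB_mulmx.
by rewrite conjmM //; [case: Bg | case: Bh].
Qed.

Lemma Bsimilar_rel Y Z : Bsimilar Y -> Bsimilar Z -> exists2 c, inB c & Z = conjm c Y.
Proof.
move=> [h Bh ->] [h' Bh' ->]; exists (h' *m invmx h).
  by apply: inB_mulmx => //; exact: inB_invmx.
by rewrite conjmM ?unitmx_inv ?conjmK //; [case: Bh | case: Bh' | case: Bh].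
Qed.

End BSimilarity.

Section BelitskiiRun.
Variables (F : fieldType) (n : nat) (A : 'M[F]_n) (As : nat -> 'M[F]_n).
Hypothesis SA : strict_upper A.
Hypothesis run : belitskii_run A As.

Lemma run_invariant k : (k <= npos n)%N ->
  Bsimilar A (As k) /\ forall g, Gk As k g <-> stab k (As k) g.
Proof.
case: run => A0 steps; elim: k => [_|k IH kn].
  by split=> [|g]; [rewrite A0; exact: Bsimilar_refl | split=> [Bg|[]//]; split].
have [BAk GkE] := IH (ltnW kn).
have [[g0 [/GkE[Bg0 Ag0] E0]] _] := steps k kn.
have SAk := Bsimilar_strict SA BAk.
split; first by rewrite E0; exact: Bsimilar_conjm.
move=> g; split=> [[/GkE[Bg _] H]|Sg]; first by split.
split; last by case: Sg.
apply/GkE; apply: stab_agree (stabW Sg) => //; rewrite E0 //.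
exact: strict_upper_conjm.
Qed.

Lemma run_agree_next k : (k < npos n)%N -> agree_first k (As k.+1) (As k).
Proof.
move=> kn; have [_ GkE] := run_invariant (ltnW kn).
by case: run => _ /(_ k kn) [[g0 [/GkE[_ Ag0] ->]] _].
Qed.

End BelitskiiRun.

Section BelitskiiStep.
Variables (F : fieldType) (n : nat) (Q A : 'M[F]_n) (As : nat -> 'M[F]_n).
Local Notation M := 'M[F]_n.
Implicit Types (Y Z g h : M).
Hypothesis SQ : strict_upper Q.
Hypothesis PQ : subpermutation Q.
Hypothesis QA : QU_shape Q A.
Hypothesis run : belitskii_run A As.

Lemma strict_upper_A : strict_upper A.
Proof. exact: (QU_shape_strict SQ QA). Qed.

Definition QU_approx k :=
  exists Y, [/\ QU_shape Q Y, Bsimilar A Y & agree_first k Y (As k)].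

Definition stab_diag_eq k := forall g, stab k (As k) g ->
  forall q, q \in upos n -> (brank q < k)%N -> As k q.1 q.2 != 0 -> g q.1 q.1 = g q.2 q.2.

Section Step.
Variable k : nat.
Hypothesis kn : (k < npos n)%N.
Hypothesis IH : stab_diag_eq k.

Lemma Bsimilar_run : Bsimilar A (As k).
Proof. by case: (run_invariant strict_upper_A run (ltnW kn)). Qed.

Lemma Bsimilar_run_next : Bsimilar A (As k.+1).
Proof. by case: (run_invariant strict_upper_A run kn). Qed.

Lemma Gk_stab g : Gk As k g <-> stab k (As k) g.
Proof. by case: (run_invariant strict_upper_A run (ltnW kn)). Qed.

Lemma strict_upper_run : strict_upper (As k).
Proof. exact: (Bsimilar_strict strict_upper_A Bsimilar_run). Qed.

Lemma strict_upper_run_next : strict_upper (As k.+1).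
Proof. exact: (Bsimilar_strict strict_upper_A Bsimilar_run_next). Qed.

Section Representative.
Variable Y : M.
Hypothesis BY : Bsimilar A Y.
Hypothesis agY : agree_first k Y (As k).

Lemma strict_upper_rep : strict_upper Y.
Proof. exact: (Bsimilar_strict strict_upper_A BY). Qed.

Lemma stab_rep g : stab k Y g <-> stab k (As k) g.
Proof.
split; first exact: stab_agree strict_upper_rep strict_upper_run agY.
exact: stab_agree strict_upper_run strict_upper_rep (agree_first_sym agY).
Qed.

Lemma orbit_valsE p x :
  orbit_vals As k p x <-> exists2 g, stab k Y g & conjm g Y p.1 p.2 = x.
Proof.
have [c Bc Ec] := Bsimilar_rel BY Bsimilar_run.
have uc : c \in unitmx by case: Bc.
have Sc : stab k Y c by split; rewrite // -Ec; exact: agree_first_sym.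
split.
  case=> g [/Gk_stab/stab_rep Sg <-]; exists (g *m c).
    exact: stab_mulmx strict_upper_rep Sg Sc.
  by rewrite Ec conjmM //; case: Sg => [[]].
case=> g Sg <-; exists (g *m invmx c); split.
  apply/Gk_stab/stab_rep.
  exact: stab_mulmx strict_upper_rep Sg (stab_invmx strict_upper_rep Sc).
have ug : g \in unitmx by case: Sg => [[]].
by rewrite Ec -conjmM ?unitmx_mul ?unitmx_inv ?ug ?uc // mulmxKV.
Qed.

Lemma stab_rep_diag_eq g q : stab k Y g -> q \in upos n -> (brank q < k)%N ->
  Y q.1 q.2 != 0 -> g q.1 q.1 = g q.2 q.2.
Proof. by move=> /stab_rep Sg qu qk; rewrite (agY qu qk); exact: IH. Qed.

(* Scale the diagonal by t on the indices that every stabiliser ties to i;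
   the induction hypothesis says the nonzero earlier entries only tie such indices. *)
Lemma stab_rescale (i j : 'I_n) : (exists2 g0, stab k Y g0 & g0 i i != g0 j j) ->
  forall t : F, t != 0 -> exists d : 'I_n -> F,
  [/\ forall c, d c != 0, d i = t, d j = 1 & stab k Y (diagm d)].
Proof.
case=> g0 S0 ne t tnz.
pose tied (c : 'I_n) := forall g, stab k Y g -> g i i = g c c.
pose d (c : 'I_n) := if excluded_middle_informative (tied c) then t else 1.
have dnz c : d c != 0.
  by rewrite /d; case: excluded_middle_informative => ?; [exact: tnz | exact: oner_neq0].
exists d; split => //.
- by rewrite /d; case: excluded_middle_informative => // [[]].
- rewrite /d; case: excluded_middle_informative => // H.
  by move: ne; rewrite H ?eqxx.
split; first exact: inB_diagm.
move=> q qu qk; rewrite conjm_diagmE //.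
case: (eqVneq (Y q.1 q.2) 0) => [->|nz]; first by rewrite mulr0 mul0r.
have tie g : stab k Y g -> g q.1 q.1 = g q.2 q.2 by move=> Sg; exact: stab_rep_diag_eq.
have -> : d q.1 = d q.2.
  rewrite /d; do 2 case: excluded_middle_informative => //.
  - by move=> H1 H2; case: H1 => g Sg; rewrite H2 // tie.
  - by move=> H1 H2; case: H2 => g Sg; rewrite H1 // -tie.
by rewrite mulrAC divff ?mul1r.
Qed.

End Representative.

Lemma agree_next : agree_first k (As k.+1) (As k).
Proof. exact: (run_agree_next strict_upper_A run kn). Qed.

Section Position.
Variables i j : 'I_n.
Hypothesis ij : (i < j)%N.
Hypothesis rank_ij : brank (i, j) = k.

Local Notation V := (orbit_vals As k (i, j)).

Lemma in_upos_ij : (i, j) \in upos n.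
Proof. by rewrite in_upos. Qed.

Lemma brank_lt_pos q : q \in upos n ->
  (brank q < k)%N = (i < q.1)%N || (q.1 == i) && (q.2 < j)%N.
Proof. by move=> qu; rewrite -rank_ij brank_ltE ?in_upos_ij. Qed.

Lemma brank_lt_succ q : q \in upos n -> (brank q < k.+1)%N ->
  (brank q < k)%N \/ q = (i, j).
Proof.
move=> qu; rewrite ltnS leq_eqVlt => /orP[/eqP E|]; last by left.
by right; apply: brank_inj qu in_upos_ij _; rewrite E rank_ij.
Qed.

Lemma agree_first_succ Y : agree_first k Y (As k) -> Y i j = As k.+1 i j ->
  agree_first k.+1 Y (As k.+1).
Proof.
move=> agY Eij q qu /(brank_lt_succ qu) [lt|-> //].
by rewrite (agY q qu lt) (agree_next qu lt).
Qed.

Lemma run_rule :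
  [/\ ((forall x, V x -> x = 0) \/ (forall x, V x)) -> As k.+1 i j = 0,
      (forall x, V x <-> x != 0) -> As k.+1 i j = 1
    & ~ ((forall x, V x -> x = 0) \/ (forall x, V x)) ->
      ~ (forall x, V x <-> x != 0) -> As k.+1 = As k].
Proof. by case: run => _ /(_ k kn) [_ /(_ (i, j) in_upos_ij rank_ij)]. Qed.

(* Rescaling reaches every t * v, and composing the rescaling with g reaches
   every v + r (t - 1) v, where r = g_ii / g_jj != 1; together they reach every value. *)
Lemma orbit_vals_full g : stab k.+1 (As k.+1) g -> g i i != g j j ->
  As k.+1 i j != 0 -> forall y, V y.
Proof.
move=> Sg ne vnz; set v := As k.+1 i j in vnz *.
have BY := Bsimilar_run_next; have SY := strict_upper_run_next.
have Bg : inB g by case: Sg.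
have sep : exists2 g0, stab k (As k.+1) g0 & g0 i i != g0 j j by exists g; first exact: stabW.
pose r := g i i * invmx g j j.
have r0 : r != 0.
  by rewrite /r invmx_upper_tri_diag // mulf_neq0 ?invr_eq0 ?inB_diag_neq0.
have r1 : r != 1.
  apply: contra ne; rewrite /r invmx_upper_tri_diag // => /eqP E.
  by rewrite -(divfK (inB_diag_neq0 j Bg) (g i i)) E mul1r.
have scaled t : t != 0 -> V (t * v).
  move=> tnz; have [d [dnz di dj Sd]] := stab_rescale BY agree_next sep tnz.
  apply/(orbit_valsE BY agree_next); exists (diagm d) => //.
  by rewrite conjm_diagmE //= di dj invr1 mulr1.
have shifted t : t != 0 -> V (v + r * (t - 1) * v).
  move=> tnz; have [d [dnz di dj Sd]] := stab_rescale BY agree_next sep tnz.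
  apply/(orbit_valsE BY agree_next); exists (g *m diagm d).
    exact: stab_mulmx SY (stabW Sg) Sd.
  have Bd : inB (diagm d) by case: Sd.
  rewrite conjmM; [|by case: Bg|by case: Bd].
  have := agree_first_conjm_next Bg (strict_upper_conjm Bd SY) SY Sd.2 in_upos_ij rank_ij.
  rewrite /= (Sg.2 (i, j) in_upos_ij) ?rank_ij // conjm_diagmE //= di dj invr1 mulr1 -/v.
  by move=> E; rewrite -(subrK v (conjm g _ i j)) E /r; ring.
move=> y; have [->|ney] := eqVneq y (v * (1 - r)).
  by rewrite mulrC; apply: scaled; rewrite subr_eq0 eq_sym.
pose t := 1 + (y - v) / (v * r).
have tnz : t != 0.
  apply: contra ney => /eqP t0; move/(congr1 (fun z => z * (v * r))): t0.
  rewrite /t mulrDl mul1r divfK ?mul0r; last exact: mulf_neq0.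
  by move=> E; rewrite -subr_eq0 -E; apply/eqP; ring.
by have := shifted t tnz; congr V; rewrite /t; field; rewrite r0 vnz.
Qed.

Lemma next_diag_eq g : stab k.+1 (As k.+1) g -> As k.+1 i j != 0 -> g i i = g j j.
Proof.
move=> Sg vnz; apply/eqP; apply: contraT => ne; have [Ra _ _] := run_rule.
have full := orbit_vals_full Sg ne vnz.
by case/eqP: vnz; apply: Ra; right.
Qed.

Definition row_tail g (a : 'I_n) := if (i < a)%N then g i a else 0.

Lemma row_tail_le g (a : 'I_n) : (a <= i)%N -> row_tail g a = 0.
Proof. by rewrite /row_tail leqNgt => /negPf ->. Qed.

(* Row i of (g Y g^-1) g = g Y, up to column c. *)
Lemma stab_row_relation Y g (c : 'I_n) : strict_upper Y -> stab k Y g -> (c <= j)%N ->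
  (forall b : 'I_n, (b < c)%N -> Y i b = 0) ->
  conjm g Y i c * g c c = g i i * Y i c + \sum_a row_tail g a * Y a c.
Proof.
move=> SY [Bg agg] cj Y0; have ug : g \in unitmx by case: Bg.
have Ug : upper_tri g by case: Bg.
have SZ := strict_upper_conjm Bg SY.
have agZ (b : 'I_n) : (i < b)%N -> (b < c)%N -> conjm g Y i b = Y i b.
  move=> ib bc; apply: (agg (i, b)); first by rewrite in_upos.
  by rewrite brank_lt_pos ?in_upos //= eqxx (leq_trans bc cj) orbT.
have E := congr1 (fun m : 'M_n => m i c) (conjm_mulmx Y ug).
rewrite /= [LHS]mxE [RHS]mxE in E.
have -> : conjm g Y i c * g c c = \sum_b conjm g Y i b * g b c.
  rewrite (bigD1 c) //= big1 ?addr0 // => b /negPf bc.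
  case: (ltngtP b c) => [lt|gt|/val_inj eq].
  - case: (leqP b i) => ib; first by rewrite SZ ?mul0r.
    by rewrite agZ // Y0 ?mul0r.
  - by rewrite Ug ?mulr0.
  - by rewrite eq eqxx in bc.
rewrite E (bigD1 i) //=; congr (_ + _).
rewrite [RHS](bigD1 i) //= row_tail_le // mul0r add0r; apply: eq_bigr => a ne.
rewrite /row_tail; case: ltnP => // ai.
by rewrite Ug ?mul0r // ltn_neqAle ai andbT; apply: contra ne => /eqP/val_inj ->.
Qed.

Lemma stab_row_comb_eq0 Y g : strict_upper Y -> stab k Y g ->
  (forall c : 'I_n, (c < j)%N -> Y i c = 0) ->
  forall c : 'I_n, (c < j)%N -> \sum_a row_tail g a * Y a c = 0.
Proof.
move=> SY Sg Y0 c cj.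
have := stab_row_relation SY Sg (ltnW cj) (fun b bc => Y0 b (ltn_trans bc cj)).
have -> : conjm g Y i c = 0.
  case: (leqP c i) => ci; first by case: Sg => Bg _; exact: strict_upper_conjm.
  rewrite (Sg.2 (i, c)) ?in_upos ?brank_lt_pos ?in_upos //= ?eqxx ?cj ?orbT //.
  exact: Y0.
by rewrite mul0r Y0 // mulr0 add0r => /esym.
Qed.

Lemma row_op_stab Y w t : strict_upper Y -> (forall a : 'I_n, (a <= i)%N -> w a = 0) ->
  (forall c : 'I_n, (c < j)%N -> \sum_a w a * Y a c = 0) ->
  stab k Y (1%:M + t *: single_row i w) /\
  conjm (1%:M + t *: single_row i w) Y i j = Y i j + t * \sum_a w a * Y a j.
Proof.
move=> SY wi wY; split; last by rewrite conjm_row_op_ge // eqxx mul1r.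
split; first exact: inB_row_op.
move=> q qu; rewrite brank_lt_pos // => /orP[iq|/andP[/eqP qi qj]].
  by rewrite conjm_row_op_ge ?(ltnW iq) // ord_eqF_gt // !mul0r addr0.
by rewrite conjm_row_op_ge ?qi // eqxx mul1r wY // mulr0 addr0.
Qed.

(* Before the pivot, a row operation with the tail of row i of a stabiliser
   rescales any nonzero value at (i, j) to any other value. *)
Lemma next_before_pivot Y : QU_shape Q Y -> Bsimilar A Y -> agree_first k Y (As k) ->
  before_pivot Q i j -> As k.+1 i j = 0.
Proof.
move=> [Y0 _] BY agY bp; have SY := strict_upper_rep BY.
have Yi0 (c : 'I_n) : (c <= j)%N -> Y i c = 0.
  by move=> cj; apply: Y0 => b nz; apply: leq_ltn_trans cj (bp b nz).
have full : (exists2 x, V x & x != 0) -> forall y, V y.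
  case=> x /(orbit_valsE BY agY) [g Sg gx] xnz y; apply/(orbit_valsE BY agY).
  have rel := stab_row_relation SY Sg (leqnn j) (fun b bj => Yi0 b (ltnW bj)).
  rewrite Yi0 // mulr0 add0r gx in rel.
  have comb := stab_row_comb_eq0 SY Sg (fun c cj => Yi0 c (ltnW cj)).
  have [Sr E] := row_op_stab (y / (x * g j j)) SY (@row_tail_le g) comb.
  exists (1%:M + y / (x * g j j) *: single_row i (row_tail g)) => //.
  have gjj : g j j != 0 by case: Sg => Bg _; exact: inB_diag_neq0.
  by rewrite E Yi0 // add0r -rel mulfVK // mulf_neq0.
have [Ra _ _] := run_rule; apply: Ra.
case: (classic (exists2 x, V x & x != 0)) => [/full|none]; first by right.
by left => x Vx; apply/eqP; apply: contraT => nz; exfalso; apply: none; exists x.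
Qed.

(* At the pivot the value is g_ii / g_jj, since by the echelon form the lower
   rows of Y contribute nothing there. *)
Lemma next_at_pivot Y : QU_shape Q Y -> Bsimilar A Y -> agree_first k Y (As k) ->
  Q i j != 0 -> As k.+1 i j = 1.
Proof.
move=> QY BY agY nz; have SY := strict_upper_rep BY.
have Y1 : Y i j = 1 by case: QY => _ ->.
have Yi0 (c : 'I_n) : (c < j)%N -> Y i c = 0.
  by case: QY => Y0 _ cj; apply: Y0; rewrite (before_pivotE PQ _ nz).
have val g : stab k Y g -> conjm g Y i j = g i i / g j j.
  move=> Sg; have Bg : inB g by case: Sg.
  have ech := QU_shape_comb_eqQ PQ QY (stab_row_comb_eq0 SY Sg Yi0).
  rewrite (sum_mulQ PQ _ nz) row_tail_le // in ech.
  have := stab_row_relation SY Sg (leqnn j) Yi0.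
  by rewrite Y1 mulr1 ech addr0 => <-; rewrite mulfK // inB_diag_neq0.
have VE x : V x <-> exists2 g, stab k Y g & g i i / g j j = x.
  by rewrite (orbit_valsE BY agY); split; case=> g Sg <-; exists g; rewrite ?val.
have Vneq0 x : V x -> x != 0.
  by case/VE => g [Bg _] <-; rewrite mulf_neq0 ?invr_eq0 ?inB_diag_neq0.
have V1 : V 1.
  by apply/VE; exists 1%:M; [exact: stab1 | rewrite !mxE !eqxx /= mulr1n divr1].
have [_ Rb Rc] := run_rule.
case: (classic (forall x, V x <-> x != 0)) => [|notRb]; first exact: Rb.
rewrite Rc //; last first.
  case=> [H|H]; first by have := H 1 V1; apply/eqP; exact: oner_neq0.
  by have := Vneq0 0 (H 0); rewrite eqxx.
have /VE [g Sg <-] : V (As k i j).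
  by exists 1%:M; split; [exact/Gk_stab/stab1 | rewrite conjm1].
case: (classic (exists2 g0, stab k Y g0 & g0 i i != g0 j j)) => [sep|nosep].
  case: notRb => x; split; first exact: Vneq0.
  move=> xnz; have [d [dnz di dj Sd]] := stab_rescale BY agY sep xnz.
  apply/(orbit_valsE BY agY); exists (diagm d) => //.
  by rewrite conjm_diagmE //= di dj Y1 invr1 !mulr1.
have -> : g i i = g j j by apply: NNPP => ne; apply: nosep; exists g => //; apply/eqP.
by rewrite divff // inB_diag_neq0 //; case: Sg.
Qed.

(* After the pivot, rows >= i of A^(k+1) still have the shape of QU_n, since the
   positions of that shape in those rows precede (i, j). *)
Lemma next_after_pivot Y b : QU_shape Q Y -> Bsimilar A Y -> agree_first k Y (As k) ->
  Q i b != 0 -> (b < j)%N ->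
  exists Y', [/\ QU_shape Q Y', Bsimilar A Y' & agree_first k.+1 Y' (As k.+1)].
Proof.
move=> QY BY agY nz bj; have SY := strict_upper_rep BY.
have [g Bg Eg] := Bsimilar_rel BY Bsimilar_run_next.
have shape (r c : 'I_n) : (i <= r)%N -> before_pivot Q r c \/ Q r c != 0 ->
    conjm g Y r c = Y r c.
  move=> ir H; rewrite -Eg; case: (leqP c r) => cr.
    by rewrite strict_upper_run_next // SY.
  have rc_u : (r, c) \in upos n by rewrite in_upos.
  have rck : (brank (r, c) < k)%N.
    rewrite brank_lt_pos //=; move: ir; rewrite leq_eqVlt => /orP[/eqP/val_inj ri|->] //.
    subst r; rewrite eqxx ltnn /=; case: H => [/(before_pivotE PQ _ nz) cb|nz'].
      exact: ltn_trans cb bj.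
    by rewrite (subperm_row_uniq PQ nz' nz).
  by rewrite (agree_next rc_u rck) (agY _ rc_u rck).
have [h Bh [QY' rows]] := QU_shape_complete_rows SQ PQ QY Bg shape.
exists (conjm h Y); split => //; first exact: Bsimilar_conjm.
move=> q qu /(brank_lt_succ qu) [|->]; last by rewrite rows // Eg.
by rewrite brank_lt_pos // => /orP[/ltnW iq|/andP[/eqP qi _]]; rewrite rows ?qi // Eg.
Qed.

End Position.

Lemma QU_approx_next : QU_approx k -> QU_approx k.+1.
Proof.
case=> Y [QY BY agY]; have [[i j] pu rank_ij] := brank_onto kn.
have ij : (i < j)%N by rewrite in_upos in pu.
case: (pivot_cases Q i j) => [bp|[b nz]].
  exists Y; split => //; apply: (agree_first_succ ij rank_ij agY).
  by rewrite (next_before_pivot ij rank_ij QY BY agY bp); case: QY => Y0 _; exact: Y0.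
rewrite leq_eqVlt => /orP[/eqP/val_inj bj|bj].
  subst b; exists Y; split => //; apply: (agree_first_succ ij rank_ij agY).
  by rewrite (next_at_pivot ij rank_ij QY BY agY nz); case: QY => _ ->.
exact: (next_after_pivot ij rank_ij QY BY agY nz bj).
Qed.

Lemma stab_diag_eq_next : stab_diag_eq k.+1.
Proof.
move=> g Sg q qu qk nz; have [[i j] pu rank_ij] := brank_onto kn.
have ij : (i < j)%N by rewrite in_upos in pu.
case: (brank_lt_succ ij rank_ij qu qk) => [lt|Eq]; last first.
  by rewrite Eq in nz *; exact: next_diag_eq.
have Sg' : stab k (As k) g.
  exact: stab_agree strict_upper_run_next strict_upper_run agree_next (stabW Sg).
by apply: (IH Sg' qu lt); rewrite -(agree_next qu lt).
Qed.

End Step.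

Lemma QU_approx_all k : (k <= npos n)%N -> QU_approx k /\ stab_diag_eq k.
Proof.
elim: k => [_|k IHk kn].
  by split=> [|g _ q _] //; exists A; split => //; exact: Bsimilar_refl.
have [Ak Dk] := IHk (ltnW kn).
by split; [exact: QU_approx_next | exact: stab_diag_eq_next].
Qed.

Lemma QU_shape_final : QU_shape Q (As (npos n)).
Proof.
have [[Y [QY BY agY]] _] := QU_approx_all (leqnn (npos n)).
have [Bn _] := run_invariant strict_upper_A run (leqnn (npos n)).
suff <- : Y = As (npos n) by [].
apply/matrixP => r c; case: (ltnP r c) => rc.
  have ru : (r, c) \in upos n by rewrite in_upos.
  exact: agY ru (brank_lt_npos ru).
by rewrite (Bsimilar_strict strict_upper_A BY) // (Bsimilar_strict strict_upper_A Bn).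
Qed.

End BelitskiiStep.

Section ElementaryOperations.
Variables (F : fieldType) (n : nat) (Q : 'M[F]_n).
Local Notation M := 'M[F]_n.
Implicit Types (X Y u : M).
Hypothesis SQ : strict_upper Q.
Hypothesis PQ : subpermutation Q.

(* The positions at which every elementary operation O_{a,c}^lam preserves QU_n. *)
Definition admissible (a c : 'I_n) :=
  (forall b, Q c b = 0) \/ exists b b', [/\ Q a b != 0, Q c b' != 0 & (b < b')%N].

Lemma elem_opE X (a c : 'I_n) lam : strict_upper X -> (a < c)%N -> forall r c' : 'I_n,
  elem_op a c lam X r c' =
    X r c' + (r == a)%:R * lam * X c c' - lam * (X r a * (c' == c)%:R).
Proof.
move=> SX ac r c'.
have wa (b : 'I_n) : (b <= a)%N -> (b == c)%:R = 0 :> F.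
  by move=> ba; rewrite ord_eqF_lt // (leq_ltn_trans ba ac).
rewrite /elem_op; have -> : 1%:M + lam *: delta_mx a c = 1%:M + lam *: single_row a (fun b => (b == c)%:R).
  apply/matrixP => r' c''; rewrite !mxE.
  by case: (r' == a); case: (c'' == c); rewrite ?mul1r ?mul0r ?mulr1 ?mulr0.
rewrite conjm_row_op //; congr (_ + _ * _ - _).
rewrite (bigD1 c) //= eqxx mul1r big1 ?addr0 // => b ne.
by rewrite (negPf ne) mul0r.
Qed.

Lemma elem_op_QU_shape X (a c : 'I_n) lam : QU_shape Q X -> (a < c)%N ->
  admissible a c -> QU_shape Q (elem_op a c lam X).
Proof.
move=> QX ac adm; have SX := QU_shape_strict SQ QX; case: (QX) => X0 X1.
have Xc0 (c' : 'I_n) : (forall b, Q a b != 0 -> (c' <= b)%N) -> X c c' = 0.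
  move=> le; apply: X0; case: adm => [Qc0 b|[b [b' [nb nb' bb']]]].
    by rewrite Qc0 eqxx.
  by apply/(before_pivotE PQ _ nb'); exact: leq_ltn_trans (le b nb) bb'.
have Xa0 (r : 'I_n) : before_pivot Q r c -> X r a = 0.
  by move=> bp; apply: X0 => b nb; exact: ltn_trans ac (bp b nb).
split=> [r c' bp|r b nb]; rewrite elem_opE //.
  have t2 : (r == a)%:R * lam * X c c' = 0.
    case: eqP => [ra|_]; last by rewrite !mul0r.
    by rewrite Xc0 ?mulr0 // => b nb; apply: ltnW; apply: bp; rewrite ra.
  have t3 : X r a * (c' == c)%:R = 0.
    by case: eqP => [cc|_]; [rewrite Xa0 ?mul0r // -cc | rewrite mulr0].
  by rewrite X0 // t2 t3 mulr0 add0r subr0.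
have t2 : (r == a)%:R * lam * X c b = 0.
  case: eqP => [ra|_]; last by rewrite !mul0r.
  rewrite Xc0 ?mulr0 // => b' nb'.
  by rewrite -ra in nb'; rewrite (subperm_row_uniq PQ nb' nb).
have t3 : X r a * (b == c)%:R = 0.
  case: eqP => [bc|_]; last by rewrite mulr0.
  by rewrite X0 ?mul0r //; apply/(before_pivotE PQ _ nb); rewrite bc.
by rewrite X1 // t2 t3 mulr0 addr0 subr0.
Qed.

Lemma apply_ops_QU_shape (ops : seq ('I_n * 'I_n * F)) X :
  (forall o, o \in ops -> (o.1.1 < o.1.2)%N /\ admissible o.1.1 o.1.2) ->
  QU_shape Q X -> forall k, QU_shape Q (apply_ops (take k ops) X).
Proof.
elim: ops X => [|o ops IH] X adm QX [|k] //=.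
have [oa op] := adm o (mem_head _ _).
apply: IH; last exact: elem_op_QU_shape.
by move=> o' o'in; apply: adm; rewrite in_cons o'in orbT.
Qed.

(* Row a of u A' = (u A' u^-1) u vanishes before the pivot of row a, and it is the
   combination of the lower rows of A' with the tail of row a of u; by the echelon
   form, that tail vanishes on every row whose pivot lies before the pivot of a. *)
Lemma unitriangular_admissible A' u : QU_shape Q A' -> inU u ->
  (forall a c, before_pivot Q a c -> conjm u A' a c = 0) ->
  forall a c : 'I_n, (a < c)%N -> u a c != 0 -> admissible a c.
Proof.
move=> QA' [Uu du] B0 a c ac nz.
have uu : u \in unitmx.
  by rewrite unitmx_upper_tri //; apply/forallP => x; rewrite du oner_neq0.
pose w (b : 'I_n) := if (a < b)%N then u a b else 0.
have comb (c' : 'I_n) : before_pivot Q a c' -> \sum_b w b * A' b c' = 0.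
  move=> bp; have E := congr1 (fun m : 'M_n => m a c') (conjm_mulmx A' uu).
  rewrite /= [LHS]mxE [RHS]mxE big1 in E; last first.
    move=> b _; case: (leqP b c') => bc; last by rewrite Uu ?mulr0.
    by rewrite B0 ?mul0r // => b' nb; exact: leq_ltn_trans bc (bp b' nb).
  case: QA' => A0 _; rewrite (bigD1 a) //= du mul1r A0 // add0r in E.
  apply: (etrans _ (esym E)); rewrite (bigD1 a) //= /w ltnn mul0r add0r; apply: eq_bigr => b ne.
  case: ltnP => // ba; rewrite Uu ?mul0r //.
  by rewrite ltn_neqAle ba andbT; apply: contra ne => /eqP/val_inj ->.
case: (classic (forall b, Q c b = 0)) => [|Qc]; first by left.
have [b' nb'] : exists b', Q c b' != 0.
  apply: NNPP => none; apply: Qc => b; apply/eqP; apply: NNPP => nb; apply: none.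
  by exists b; apply/negP.
have late (m : nat) : (forall c' : 'I_n, (c' < m)%N -> before_pivot Q a c') -> (m <= b')%N.
  move=> bpm; rewrite leqNgt; apply/negP => b'm; case/eqP: nz.
  have -> : u a c = w c by rewrite /w ac.
  exact: (QU_shape_comb_eq0 PQ QA' (fun c' cm => comb c' (bpm c' cm)) nb' b'm).
right; case: (classic (exists s, Q a s != 0)) => [[s ns]|none]; last first.
  suff : (n <= b')%N by rewrite leqNgt ltn_ord.
  by apply: late => c' _ s ns; case: none; exists s.
exists s, b'; split => //.
have := late s (fun c' cs => proj2 (before_pivotE PQ c' ns) cs).
rewrite leq_eqVlt => /orP[/eqP/val_inj E|] //.
by rewrite -E in nb'; rewrite (subperm_col_uniq PQ ns nb') ltnn in ac.
Qed.

End ElementaryOperations.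

Section UnitriangularFactorisation.
Variables (F : fieldType) (n : nat).
Local Notation M := 'M[F]_n.
Implicit Types (u X h : M).

Definition offdiag_support u : {set 'I_n * 'I_n} :=
  [set p : 'I_n * 'I_n | (p.1 < p.2)%N && (u p.1 p.2 != 0)].

Lemma inU_unitmx u : inU u -> u \in unitmx.
Proof.
by case=> Uu du; rewrite unitmx_upper_tri //; apply/forallP => x; rewrite du oner_neq0.
Qed.

Lemma unitmx_elem (a c : 'I_n) lam : (a < c)%N -> (1%:M + lam *: delta_mx a c : M) \in unitmx.
Proof.
move=> ac; suff /mulmx1_unit[] :
    (1%:M + lam *: delta_mx a c) *m (1%:M - lam *: delta_mx a c) = 1%:M :> M by [].
rewrite mulmxDl mul1mx mulmxBr mulmx1 -scalemxAl -scalemxAr mul_delta_mx_cond.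
by rewrite ord_eqF_gt // mulr0n !scaler0 subr0 subrK.
Qed.

Lemma offdiag_support_peel u (a c : 'I_n) : (a < c)%N ->
  offdiag_support (u - u a c *: delta_mx a c) = offdiag_support u :\ (a, c).
Proof.
move=> ac; apply/setP => [[r c']]; rewrite !inE /= xpair_eqE !mxE.
case: (eqVneq r a) => [->|]; last by rewrite mulr0 subr0.
case: (eqVneq c' c) => [->|]; last by rewrite mulr0 subr0.
by rewrite mulr1 subrr eqxx andbF.
Qed.

(* When no row below a has an off-diagonal entry, row c of the peeled matrix is
   that of the identity, so the elementary factor multiplies back exactly. *)
Lemma unitriangular_peel u (a c : 'I_n) : inU u -> (a < c)%N ->
  (forall r c' : 'I_n, (a < r)%N -> (r < c')%N -> u r c' = 0) ->
  (1%:M + u a c *: delta_mx a c) *m (u - u a c *: delta_mx a c) = u.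
Proof.
move=> [Uu du] ac below; set u' := u - _.
suff Eu' : delta_mx a c *m u' = delta_mx a c.
  by rewrite mulmxDl mul1mx -scalemxAl Eu' subrK.
apply/matrixP => r c'; rewrite mxE (bigD1 c) //= big1 ?addr0; last first.
  by move=> b ne; rewrite mxE (negPf ne) andbF mul0r.
rewrite [delta_mx a c r c]mxE [delta_mx a c r c']mxE eqxx andbT.
case: (r == a); rewrite ?mul0r //= mul1r !mxE (ord_eqF_gt ac) mulr0 subr0.
case: (ltngtP c c') => [cc|cc|/val_inj ->]; last by rewrite du eqxx.
  by rewrite below // ord_eqF_gt.
by rewrite Uu // ord_eqF_lt.
Qed.

Lemma inU_offdiag_support0 u : inU u -> offdiag_support u = set0 -> u = 1%:M.
Proof.
case=> Uu du u0; apply/matrixP => r c; rewrite mxE.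
case: (ltngtP r c) => [rc|cr|/val_inj ->]; last by rewrite du eqxx.
  rewrite ord_eqF_lt //; apply/eqP; apply: contraT => nz.
  have : (r, c) \in offdiag_support u by rewrite inE /= rc.
  by rewrite u0 inE.
by rewrite Uu // ord_eqF_gt.
Qed.

Lemma inU_peel u (a c : 'I_n) lam : inU u -> (a < c)%N -> inU (u - lam *: delta_mx a c).
Proof.
case=> Uu du ac; split=> [r c' cr|x]; rewrite !mxE.
  rewrite (Uu r c') //; case: (r =P a) => [ra|_]; last by rewrite /= mulr0n mulr0 subr0.
  by rewrite (ord_eqF_lt (ltn_trans _ ac)) /= ?mulr0n ?mulr0 ?subr0 // -ra.
by rewrite du; case: (x =P a) => [->|_]; rewrite ?(ord_eqF_lt ac) /= mulr0n mulr0 subr0.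
Qed.

Lemma unitriangular_ops u : inU u -> exists ops : seq ('I_n * 'I_n * F),
  (forall o, o \in ops -> [/\ (o.1.1 < o.1.2)%N, u o.1.1 o.1.2 = o.2 & o.2 != 0]) /\
  forall X, apply_ops ops X = conjm u X.
Proof.
move: {2}#|_| (eqxx #|offdiag_support u|) => N; elim/ltn_ind: N u => N IH u /eqP defN Uu.
case: (posnP N) => [N0|Npos].
  exists [::]; split => // X; rewrite (inU_offdiag_support0 Uu) ?conjm1 //.
  by apply: cards0_eq; rewrite defN.
rewrite -defN in Npos.
have [[a c] pin amax] := eq_bigmax_cond (fun p : 'I_n * 'I_n => val p.1) Npos.
move: (pin); rewrite inE /= => /andP[ac nz].
have below (r c' : 'I_n) : (a < r)%N -> (r < c')%N -> u r c' = 0.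
  move=> ar rc; apply/eqP; apply: contraT => nz'.
  have := @leq_bigmax_cond _ (fun p => p \in offdiag_support u) (fun p : 'I_n * 'I_n => val p.1) (r, c').
  by rewrite inE /= rc nz' amax leqNgt ar => /(_ isT).
set u' := u - u a c *: delta_mx a c.
have Uu' : inU u' by exact: inU_peel.
have lt_u' : (#|offdiag_support u'| < N)%N.
  by rewrite -defN offdiag_support_peel // (cardsD1 (a, c) (offdiag_support u)) pin.
have [ops [Hops Eops]] := IH _ lt_u' u' (eqxx _) Uu'.
exists (rcons ops (a, c, u a c)); split.
  move=> o; rewrite mem_rcons in_cons => /orP[/eqP -> //|oin].
  have [o1 o2 o3] := Hops o oin; split => //.
  move: o2; rewrite !mxE; case: (eqVneq o.1.1 a) => [oa|]; last by rewrite mulr0 subr0.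
  case: (eqVneq o.1.2 c) => [oc|]; last by rewrite mulr0 subr0.
  by rewrite oa oc /= mulr1n mulr1 subrr => E; rewrite -E eqxx in o3.
move=> X; rewrite /apply_ops foldl_rcons -/(apply_ops ops X) Eops /elem_op /=.
by rewrite -conjmM ?unitmx_elem ?inU_unitmx // unitriangular_peel.
Qed.

Lemma inB_unitriangular_part h : inB h -> inU (diagm (fun c => (h c c)^-1) *m h).
Proof.
case=> Uh uh; split=> [r c cr|c]; rewrite mul_diag_mx mxE; first by rewrite Uh ?mulr0.
by rewrite mxE mulVf // inB_diag_neq0.
Qed.

End UnitriangularFactorisation.

Unset Implicit Arguments.
Set Strict Implicit.

Theorem theorem2p16 (F : fieldType) (n : nat) (Q A Ainf : 'M[F]_n) :
  strict_upper Q -> subpermutation Q -> inQU Q A ->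
  belitskii_form A Ainf ->
  inQU Q Ainf /\
  exists ops : seq ('I_n * 'I_n * F),
    (forall o, o \in ops -> (o.1.1 < o.1.2)%N) /\
    (forall k, (k <= size ops)%N -> inQU Q (apply_ops (take k ops) A)) /\
    exists D, inD D /\ apply_ops ops A = conjm D Ainf.
Proof.
move=> SQ PQ /(inQU_shape PQ) QA [As [run ->]].
have QAinf := QU_shape_final SQ PQ QA run.
split; first exact: QU_shape_inQU.
have [h Bh Eh] := (run_invariant (QU_shape_strict SQ QA) run (leqnn _)).1.
pose d c := (h c c)^-1.
have dnz c : d c != 0 by rewrite invr_eq0 inB_diag_neq0.
have Uu := inB_unitriangular_part Bh.
have Cu : conjm (diagm d *m h) A = conjm (diagm d) (As (npos n)).
  by rewrite conjmM ?Eh //; [case: (inB_diagm dnz) | case: Bh].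
have [ops [Hops Eops]] := unitriangular_ops Uu.
exists ops; split; first by move=> o /Hops[].
split.
  move=> k _; apply: (QU_shape_inQU PQ); apply: (apply_ops_QU_shape SQ PQ _ QA) => o /Hops[o1 o2 o3].
  split=> //; apply: (unitriangular_admissible PQ QA Uu) o1 _; last by rewrite o2.
  move=> a c bp; rewrite Cu conjm_diagmE //.
  by case: QAinf => A0 _; rewrite A0 // mulr0 mul0r.
exists (diagm d); split; last by rewrite Eops Cu.
split; last by case: (inB_diagm dnz).
by move=> a b ab; rewrite diagmE (negPf ab) mul0r.
Qed.
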